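(* Let $n\ge 1$, $w\in S_n$, and let $D^w$ be its rank matrix. Extend it by $D^w_{0,q}=D^w_{p,0}=0$ for all $p,q$. Call a position $(p,q)\in\{1,\dots,n\}^2$ non-redundant if $D^w_{p,q}\neq D^w_{p-1,q}$ and $D^w_{p,q}\neq D^w_{p,q-1}$. Then the number of non-redundant positions $(p,q)$ with $1\le D^w_{p,q}\le n-1$ equals $l(w)+n-1$.
   Context: $S_n$ is the symmetric group and $l(w)$ is the number of inversions of $w$, i.e. $\#\{(i,j): i<j,\ w(i)>w(j)\}$. The rank matrix of $w$ is the $n\times n$ integer matrix $D^w$ with $D^w_{p,q}=\#\{i\in\{1,\dots,n\}: i\le p,\ w(i)\le q\}$. Interpretation: in the product $\prod_{p,q}\mathrm{Gr}_{D^w_{p,q}}(E)$ carrying inclusions $\ell_{p,q}\subset\ell_{p,q+1}$ and $\ell_{p,q}\subset\ell_{p+1,q}$, a factor is redundant exactly when its dimension equals that of its left or upper neighbour. The non-redundant positions with $1\le D^w_{p,q}\le n-1$ are therefore the copies of Grassmannians $\mathrm{Gr}_i$, $1\le i\le n-1$, that remain after eliminating this redundancy. *)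

From mathcomp Require Import all_boot all_order all_fingroup.
Set Implicit Arguments. Unset Strict Implicit. Unset Printing Implicit Defensive.

(* Permutations of {1..n} are modelled as 'S_n = {perm 'I_n}, with the
   shift i <-> i+1 between 'I_n = {0..n-1} and {1..n}. *)

Definition inv_count n (w : 'S_n) : nat :=
  #|[set ij : 'I_n * 'I_n | (ij.1 < ij.2) && (w ij.2 < w ij.1)]|.

(* Rank matrix D^w_{p,q} = #{i in {1..n} : i <= p, w(i) <= q}, for p,q : nat.
   In 0-indexed form: i+1 <= p <-> i < p, w(i)+1 <= q <-> w(i) < q.
   In particular D^w_{0,q} = D^w_{p,0} = 0 (the extension in the paper). *)
Definition rankD n (w : 'S_n) (p q : nat) : nat :=
  #|[set i : 'I_n | (i < p) && (w i < q)]|.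

Definition nonredundant n (w : 'S_n) (p q : nat) : bool :=
  (rankD w p q != rankD w p.-1 q) && (rankD w p q != rankD w p q.-1).

Definition count_nonred n (w : 'S_n) : nat :=
  #|[set pq : 'I_n * 'I_n |
     let p := pq.1.+1 in let q := pq.2.+1 in
     [&& nonredundant w p q, 1 <= rankD w p q & rankD w p q <= n.-1]]|.

From mathcomp Require Import all_boot all_order all_fingroup.
Set Implicit Arguments. Unset Strict Implicit.

(* Moving one step down (resp. right) from (a, b) to (a+1, b+1) raises the
   rank by one exactly when w(a) <= b (resp. w^-1(b) <= a), so (a+1, b+1) is
   non-redundant iff w(a) <= b and w^-1(b) <= a.  Its rank is then positive,
   and it is < n unless (a+1, b+1) = (n, n), since D_{p,q} <= min(p, q) and
   D_{n,n} = n.  Substituting b = w(i), the non-redundant positions are the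
   pairs i <= a with w(a) <= w(i): the n diagonal pairs and the l(w)
   inversions.  Removing the corner leaves l(w) + n - 1. *)

Section RankMatrix.

Variable n : nat.
Implicit Types w : 'S_n.

Lemma rankD_inv w p q : rankD w^-1%g q p = rankD w p q.
Proof.
rewrite /rankD -(card_preimset _ (@perm_inj _ w)).
by apply: eq_card => i; rewrite !inE permK andbC.
Qed.

Lemma rankD_succl w (a : 'I_n) q : rankD w a.+1 q = rankD w a q + (w a < q).
Proof.
rewrite /rankD (cardsD1 a) addnC inE ltnS leqnn /=; congr (_ + _).
apply: eq_card => i; rewrite !inE ltnS leq_eqVlt.
by case: (eqVneq i a) => [->|/negbTE ne]; rewrite ?ltnn ?eqxx ?andbF // val_eqE ne.
Qed.

Lemma rankD_succr w p (b : 'I_n) : rankD w p b.+1 = rankD w p b + (w^-1%g b < p).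
Proof. by rewrite -!(rankD_inv _ p) rankD_succl. Qed.

Lemma rankD_le w p q : rankD w p q <= p.
Proof.
rewrite /rankD cardE -(size_map val).
rewrite -[p in _ <= p](size_iota 0) uniq_leq_size ?map_inj_uniq ?enum_uniq //.
  exact: val_inj.
by move=> x /mapP [i]; rewrite mem_enum inE => /andP [ip _] ->; rewrite mem_iota.
Qed.

Lemma rankD_le_min w p q : rankD w p q <= minn p q.
Proof. by rewrite leq_min rankD_le -rankD_inv rankD_le. Qed.

Lemma rankD_full w : rankD w n n = n.
Proof.
rewrite /rankD -[RHS]card_ord; apply: eq_card => i.
by rewrite !inE !ltn_ord.
Qed.

Lemma nonredundantE w (a b : 'I_n) :
  nonredundant w a.+1 b.+1 = (w a <= b) && (w^-1%g b <= a).
Proof.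
rewrite /nonredundant /= [X in X != rankD w a _]rankD_succl.
rewrite [X in X != rankD w _ b]rankD_succr !ltnS.
by rewrite -[X in _ != X]addn0 eqn_add2l -[X in _ + _ != X]addn0 eqn_add2l !eqb0 !negbK.
Qed.

Lemma rankD_gt0 w (a : 'I_n) q : w a < q -> 0 < rankD w a.+1 q.
Proof. by rewrite rankD_succl => ->; rewrite addn1. Qed.

Lemma rankD_lt_full w (a b : 'I_n) :
  (rankD w a.+1 b.+1 < n) = (a.+1 < n) || (b.+1 < n).
Proof.
have [a_lt | a_ge] := ltnP a.+1 n.
  by rewrite (leq_ltn_trans (rankD_le_min _ _ _)) // gtn_min a_lt.
have [b_lt | b_ge] := ltnP b.+1 n.
  by rewrite (leq_ltn_trans (rankD_le_min _ _ _)) // gtn_min b_lt orbT.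
have [-> ->] : a.+1 = n /\ b.+1 = n by split; apply/eqP; rewrite eqn_leq ltn_ord.
by rewrite rankD_full ltnn.
Qed.

Lemma card_weak_inversions w :
  #|[set ij : 'I_n * 'I_n | (ij.1 <= ij.2) && (w ij.2 <= w ij.1)]| = inv_count w + n.
Proof.
set S := [set ij | _]; set diag := [set ij : 'I_n * 'I_n | ij.1 == ij.2].
rewrite -(cardsID diag S) addnC; congr (_ + _).
  apply: eq_card => -[i j]; rewrite !inE /= -val_eqE /= [i <= j]leq_eqVlt.
  case: (eqVneq (val i) j) => [/val_inj -> | ne] /=; first by rewrite ltnn.
  rewrite [w j <= _]leq_eqVlt -[_ == _ :> nat]/(w j == w i).
  by rewrite (inj_eq (@perm_inj _ w)) eq_sym -val_eqE (negbTE ne).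
have -> : S :&: diag = [set (i, i) | i in 'I_n].
  apply/setP => -[i j]; rewrite !inE /=.
  apply/andP/imsetP => [[_ /eqP <-] | [k _ [-> ->]]]; first by exists i.
  by rewrite !leqnn eqxx.
by rewrite card_imset ?card_ord // => i j [].
Qed.

Lemma card_nonredundant_pattern w :
  #|[set ab : 'I_n * 'I_n | (w ab.1 <= ab.2) && (w^-1%g ab.2 <= ab.1)]| = inv_count w + n.
Proof.
pose swap ab : 'I_n * 'I_n := (w^-1%g ab.2, ab.1).
have swap_inj : injective swap by move=> [a b] [a' b'] [/perm_inj -> ->].
rewrite -card_weak_inversions -[RHS](card_preimset _ swap_inj).
by apply: eq_card => -[a b]; rewrite !inE /= permKV andbC.
Qed.

End RankMatrix.

Theorem proposition2p4 (n : nat) (hn : 1 <= n) (w : 'S_n) :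
  count_nonred w = inv_count w + n - 1.
Proof.
case: n hn w => // m _ w.
set pattern := [set ab : 'I_m.+1 * 'I_m.+1 | (w ab.1 <= ab.2) && (w^-1%g ab.2 <= ab.1)].
have lt_max (c : 'I_m.+1) : (c < m) = (c != ord_max).
  by rewrite ltn_neqAle -ltnS ltn_ord andbT.
have -> : count_nonred w = #|pattern :\ (ord_max, ord_max)|.
  apply: eq_card => -[a b]; rewrite !inE /= nonredundantE.
  have [wab /= | _] := boolP (w a <= b); last by rewrite andbF.
  rewrite rankD_gt0 ?ltnS // -[rankD _ _ _ <= m]ltnS rankD_lt_full !ltnS !lt_max negb_and.
  by rewrite andbC.
have := cardsD1 (ord_max, ord_max) pattern.
rewrite {}/pattern card_nonredundant_pattern inE /= !leq_ord add1n => ->.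
by rewrite subn1.
Qed.
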